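(* For any topologically reasonable pointclass $\Gamma$, $\Gamma(\mathbb{D})$ implies $\Gamma(\mathbb{C})$; that is, if every set in $\Gamma$ has the Baire property with respect to the dominating topology $\mathcal{D}$ on $\omega^\omega$, then every set in $\Gamma$ has the Baire property with respect to the standard (Baire space, resp. Cantor space) topology.
   Context: For $N\in\omega$ and $f\in\omega^\omega$ put $[N,f]=\{x\in\omega^\omega: f{\restriction}N\subseteq x \text{ and } x(n)\ge f(n)\text{ for all }n\}$. The sets $[N,f]$ form a base of a topology $\mathcal{D}$ on $\omega^\omega$, the dominating topology (it refines the usual Baire space topology). $\mathbb{D}$ (Hechler forcing) is $\omega\times\omega^\omega$ with $(N,f)\le(M,g)$ iff $N\ge M$, $f{\restriction}M=g{\restriction}M$ and $f\ge g$ pointwise; $\mathbb{C}$ is Cohen forcing $\omega^{<\omega}$ (or $2^{<\omega}$) ordered by reverse inclusion. $\Gamma(\mathbb{D})$ means every set in $\Gamma$ (of subsets of $\omega^\omega$) has the Baire property in $\mathcal{D}$; $\Gamma(\mathbb{C})$ means every set in $\Gamma$ has the Baire property in the usual topology of $\omega^\omega$ or $2^\omega$. A pointclass $\Gamma$ is topologically reasonable if it is closed under continuous preimages and $A\cap Q\in\Gamma$ whenever $A\in\Gamma$ and $Q$ is closed. *)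

From Stdlib Require Import Arith.

Definition baire := nat -> nat.
Definition pset := baire -> Prop.

Definition agree (n : nat) (x y : baire) : Prop := forall i, i < n -> x i = y i.

Definition open_std (U : pset) : Prop :=
  forall x, U x -> exists n, forall y, agree n x y -> U y.
Definition closed_std (Q : pset) : Prop := open_std (fun x => ~ Q x).
Definition continuous_std (f : baire -> baire) : Prop :=
  forall x n, exists m, forall y, agree m x y -> agree n (f x) (f y).

Definition dom_basic (N : nat) (f : baire) : pset :=
  fun x => agree N f x /\ forall n, f n <= x n.
Definition open_dom (U : pset) : Prop :=
  forall x, U x -> exists N f, dom_basic N f x /\ forall y, dom_basic N f y -> U y.

Section Category.
Variable op : pset -> Prop.

Definition closure (A : pset) : pset :=
  fun x => forall U, op U -> U x -> exists y, U y /\ A y.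
Definition nowhere_dense (A : pset) : Prop :=
  forall U, op U -> (forall x, U x -> closure A x) -> forall x, ~ U x.
Definition meager (A : pset) : Prop :=
  exists F : nat -> pset, (forall k, nowhere_dense (F k)) /\
    forall x, A x -> exists k, F k x.
Definition baire_property (A : pset) : Prop :=
  exists U, op U /\ meager (fun x => ~ (A x <-> U x)).
End Category.

Definition pointclass := pset -> Prop.

Definition topologically_reasonable (G : pointclass) : Prop :=
  (forall A f, G A -> continuous_std f -> G (fun x => A (f x))) /\
  (forall A Q, G A -> closed_std Q -> G (fun x => A x /\ Q x)).

Definition Gamma_D (G : pointclass) : Prop :=
  forall A, G A -> baire_property open_dom A.
Definition Gamma_C (G : pointclass) : Prop :=
  forall A, G A -> baire_property open_std A.

From Stdlib Require Import Arith Lia List Classical ClassicalEpsilon FunctionalExtensionality.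
From Stdlib Require Cantor.

(* [decode] replaces every entry m of a sequence by m - ⌊√m⌋².  It is continuous,
   and every value has arbitrarily large codes, so [decode] maps a dominating basic
   set [N,f] onto the cylinder of (decode f)|N.  The key point is that it reflects
   meagerness: if the part of [N,f] sent into E is covered by D-nowhere-dense sets
   F_k, then E is meager in that cylinder.  Indeed, a point z of E outside the
   countably many nowhere dense sets [stuck k s] lifts by a fusion: finite codes of
   z are extended block by block, each block avoiding the next F_k on a basic set
   and dominating all witnesses chosen before, so the limit lies in [N,f], decodes
   to z, and misses every F_k -- a contradiction.
   For A in Γ, the preimage A ∘ decode is in Γ and has the D-Baire property via a
   D-open U; then A is meagerly close to the union of the cylinders whose lifted
   basic sets lie inside U. *)

Definition sqrt_rem (m : nat) : nat := m - Nat.sqrt m * Nat.sqrt m.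
Definition code (k v : nat) : nat := Nat.max v k * Nat.max v k + v.

Lemma sqrt_rem_code k v : sqrt_rem (code k v) = v.
Proof.
  unfold sqrt_rem, code.
  rewrite (Nat.sqrt_unique (Nat.max v k * Nat.max v k + v) (Nat.max v k)); nia.
Qed.

Lemma code_ge k v : k <= code k v.
Proof. unfold code. nia. Qed.

Definition decode (x : baire) : baire := fun n => sqrt_rem (x n).

Lemma continuous_decode : continuous_std decode.
Proof. intros x n. exists n. intros y H i Hi. unfold decode. now rewrite H. Qed.

Definition initial (f : baire) (n : nat) : list nat := map f (seq 0 n).

Lemma length_initial f n : length (initial f n) = n.
Proof. unfold initial. now rewrite length_map, length_seq. Qed.

Lemma nth_initial f n i : i < n -> nth i (initial f n) 0 = f i.
Proof.
  intros H. unfold initial.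
  rewrite (nth_indep _ 0 (f 0)) by (rewrite length_map, length_seq; lia).
  now rewrite map_nth, seq_nth by lia.
Qed.

Definition extends (l : list nat) (z : baire) : Prop :=
  forall i, i < length l -> nth i l 0 = z i.

Lemma extends_initial f n z : agree n f z -> extends (initial f n) z.
Proof.
  intros H i Hi. rewrite length_initial in Hi. rewrite nth_initial by exact Hi. now apply H.
Qed.

Definition prepend (s : list nat) (g : baire) : baire :=
  fun i => if i <? length s then nth i s 0 else g i.

Lemma prepend_lt s g i : i < length s -> prepend s g i = nth i s 0.
Proof. intros H. unfold prepend. now rewrite (proj2 (Nat.ltb_lt _ _) H). Qed.

Lemma prepend_ge s g i : length s <= i -> prepend s g i = g i.
Proof. intros H. unfold prepend. now rewrite (proj2 (Nat.ltb_ge _ _) H). Qed.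

Lemma prepend_initial f n i : prepend (initial f n) f i = f i.
Proof.
  destruct (Nat.lt_ge_cases i n).
  - rewrite prepend_lt, nth_initial; rewrite ?length_initial; easy.
  - now rewrite prepend_ge by (rewrite length_initial; lia).
Qed.

Definition is_prefix (s t : list nat) : Prop :=
  length s <= length t /\ forall i, i < length s -> nth i s 0 = nth i t 0.

Lemma is_prefix_refl s : is_prefix s s.
Proof. split; auto. Qed.

Lemma is_prefix_trans s t u : is_prefix s t -> is_prefix t u -> is_prefix s u.
Proof. intros [A B] [C D]. split; [lia|]. intros i Hi. rewrite B by lia. apply D; lia. Qed.

Lemma firstn_is_prefix s t : is_prefix s t -> firstn (length s) t = s.
Proof.
  intros [A B]. apply nth_ext with 0 0; rewrite length_firstn; [lia|].
  intros i Hi. rewrite nth_firstn, (proj2 (Nat.ltb_lt i (length s))) by lia.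
  symmetry. apply B. lia.
Qed.

Fixpoint max_upto (a : nat) (h : nat -> nat) : nat :=
  match a with 0 => h 0 | S a => Nat.max (max_upto a h) (h (S a)) end.

Lemma max_upto_ge a h n : n <= a -> h n <= max_upto a h.
Proof.
  induction a; intros Hn; simpl.
  - now replace n with 0 by lia.
  - destruct (Nat.eq_dec n (S a)) as [->|Hne]; [lia|].
    specialize (IHa ltac:(lia)). lia.
Qed.

Fixpoint list_of_nat_len (k n : nat) : list nat :=
  match k with
  | 0 => nil
  | S k => let (a, b) := Cantor.of_nat n in a :: list_of_nat_len k b
  end.

Definition list_of_nat (n : nat) : list nat :=
  let (k, m) := Cantor.of_nat n in list_of_nat_len k m.

Lemma list_of_nat_surj l : exists n, list_of_nat n = l.
Proof.
  assert (Hlen : exists m, list_of_nat_len (length l) m = l).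
  { induction l as [|a l [m Hm]]; [now exists 0|].
    exists (Cantor.to_nat (a, m)). cbn [list_of_nat_len length].
    now rewrite Cantor.cancel_of_to, Hm. }
  destruct Hlen as [m Hm]. exists (Cantor.to_nat (length l, m)).
  unfold list_of_nat. now rewrite Cantor.cancel_of_to.
Qed.

(** * Category in the two topologies *)

Section Meager.
Variable op : pset -> Prop.

Lemma nowhere_dense_meager X : nowhere_dense op X -> meager op X.
Proof. intros H. exists (fun _ => X). split; [easy | now exists 0]. Qed.

Lemma meager_empty : meager op (fun _ => False).
Proof.
  apply nowhere_dense_meager. intros U HU Hcl x Ux.
  now destruct (Hcl x Ux U HU Ux) as (y & _ & []).
Qed.

Lemma meager_subset X Y : meager op X -> (forall z, Y z -> X z) -> meager op Y.
Proof. intros [F [H1 H2]] HY. exists F. split; auto. Qed.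

Lemma meager_guard (P : Prop) X : (P -> meager op X) -> meager op (fun z => P /\ X z).
Proof.
  intros H. destruct (classic P) as [HP|HP].
  - apply (meager_subset _ _ (H HP)). now intros z [].
  - apply (meager_subset _ _ meager_empty). now intros z [].
Qed.

Lemma meager_countable_union (I : Type) (e : nat -> I) (M : I -> pset) :
  (forall i, exists n, e n = i) -> (forall i, meager op (M i)) ->
  meager op (fun z => exists i, M i z).
Proof.
  intros He HM.
  set (F i := proj1_sig (constructive_indefinite_description _ (HM i))).
  assert (HF : forall i, (forall k, nowhere_dense op (F i k)) /\
                         forall z, M i z -> exists k, F i k z).
  { intros i. unfold F. now destruct constructive_indefinite_description. }
  exists (fun n => let (a, k) := Cantor.of_nat n in F (e a) k). split.
  - intros n. destruct (Cantor.of_nat n). apply HF.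
  - intros z [i Hz]. destruct (He i) as [a <-]. destruct (proj2 (HF (e a)) z Hz) as [k Hk].
    exists (Cantor.to_nat (a, k)). now rewrite Cantor.cancel_of_to.
Qed.

Lemma meager_union X Y : meager op X -> meager op Y -> meager op (fun z => X z \/ Y z).
Proof.
  intros HX HY.
  assert (H : meager op (fun z => exists b : bool, (if b then X else Y) z)).
  { apply (meager_countable_union bool (Nat.eqb 0)).
    - intros []; [now exists 0 | now exists 1].
    - now intros []. }
  apply (meager_subset _ _ H). intros z [Hz|Hz]; [exists true | exists false]; exact Hz.
Qed.
End Meager.

Lemma nowhere_dense_std_intro X :
  (forall n x, exists n' w, (forall z, agree n' w z -> agree n x z) /\
                            (forall z, agree n' w z -> ~ X z)) ->
  nowhere_dense open_std X.
Proof.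
  intros H U HU Hcl x Ux. destruct (HU x Ux) as [n Hn].
  destruct (H n x) as (n' & w & Hsub & Hdisj).
  assert (Uw : U w) by (apply Hn, Hsub; now intros i _).
  destruct (Hcl w Uw (agree n' w)) as (y & Hy & HXy).
  - intros z Hz. exists n'. intros y Hy i Hi. rewrite (Hz i Hi). now apply Hy.
  - now intros i _.
  - exact (Hdisj y Hy HXy).
Qed.

Lemma dom_basic_self N f : dom_basic N f f.
Proof. split; [now intros i _ | intros; lia]. Qed.

Lemma dom_basic_open N f : open_dom (dom_basic N f).
Proof.
  intros x [Ax Bx]. exists N, x. split; [apply dom_basic_self|].
  intros y [Ay By]. split.
  - intros i Hi. rewrite (Ax i Hi). now apply Ay.
  - intros i. specialize (Bx i); specialize (By i); lia.
Qed.

Definition pmax (f g : baire) : baire := fun i => Nat.max (f i) (g i).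

Lemma agree_pmax N f N' f' y :
  dom_basic N f y -> dom_basic N' f' y -> agree N f (pmax f f').
Proof.
  intros [A _] [_ B'] i Hi. unfold pmax. rewrite (A i Hi). specialize (B' i). lia.
Qed.

Lemma dom_basic_pmax N f N' f' y w :
  dom_basic N f y -> dom_basic N' f' y ->
  dom_basic (Nat.max N N') (pmax f f') w -> dom_basic N f w /\ dom_basic N' f' w.
Proof.
  intros Hy Hy' [Aw Bw].
  pose proof (agree_pmax _ _ _ _ _ Hy Hy') as E.
  pose proof (agree_pmax _ _ _ _ _ Hy' Hy) as E'.
  split; split; intros i; specialize (Bw i); unfold pmax in *.
  - intros Hi. rewrite (E i Hi). apply Aw. lia.
  - lia.
  - intros Hi. rewrite (E' i Hi). unfold pmax. rewrite Nat.max_comm. apply Aw. lia.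
  - lia.
Qed.

Lemma nowhere_dense_dom_shrink X :
  nowhere_dense open_dom X -> forall N f, exists N' f',
    N <= N' /\ agree N f f' /\ (forall i, f i <= f' i) /\
    forall y, dom_basic N' f' y -> ~ X y.
Proof.
  intros HX N f. apply NNPP. intros Hn.
  apply (HX (dom_basic N f) (dom_basic_open N f)) with (x := f); [|apply dom_basic_self].
  intros x Hx U HU HUx. destruct (HU x HUx) as (N1 & f1 & Hx1 & HsU).
  apply NNPP. intros Hno. apply Hn.
  exists (Nat.max N N1), (pmax f f1).
  split; [lia|]. split; [exact (agree_pmax _ _ _ _ _ Hx Hx1)|].
  split; [intros i; unfold pmax; lia|].
  intros y Hy HXy. apply Hno. exists y. split; [|exact HXy].
  apply HsU, (dom_basic_pmax _ _ _ _ _ _ Hx Hx1 Hy).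
Qed.

(** * Lifting along [decode] by fusion *)

Section Chain.
Variable st : nat -> list nat.
Hypothesis chain_step : forall k, is_prefix (st k) (st (S k)).
Hypothesis chain_grows : forall k, length (st k) < length (st (S k)).

Lemma chain_prefix j k : j <= k -> is_prefix (st j) (st k).
Proof.
  induction 1; [apply is_prefix_refl|].
  exact (is_prefix_trans _ _ _ IHle (chain_step m)).
Qed.

Lemma chain_length_le j k : j <= k -> length (st j) <= length (st k).
Proof. intros H. apply (chain_prefix j k H). Qed.

Lemma chain_length_ge k : k <= length (st k).
Proof. induction k; [lia|]. specialize (chain_grows k). lia. Qed.

Definition chain_limit : baire := fun i => nth i (st (S i)) 0.

Lemma chain_limit_nth k i : i < length (st k) -> chain_limit i = nth i (st k) 0.
Proof.
  intros Hi. unfold chain_limit.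
  destruct (chain_prefix k (Nat.max k (S i)) ltac:(lia)) as [_ Hk].
  destruct (chain_prefix (S i) (Nat.max k (S i)) ltac:(lia)) as [_ Hi'].
  rewrite Hk by exact Hi. apply Hi'. specialize (chain_length_ge (S i)). lia.
Qed.

Lemma chain_block i : length (st 0) <= i ->
  exists m, length (st m) <= i < length (st (S m)).
Proof.
  intros H0.
  assert (H : forall M, i < length (st M) -> exists m, length (st m) <= i < length (st (S m))).
  { induction M; intros HM; [lia|].
    destruct (Nat.lt_ge_cases i (length (st M))); [auto | now exists M]. }
  apply (H (S i)). specialize (chain_length_ge (S i)). lia.
Qed.
End Chain.

Definition codes (s : list nat) (z : baire) : Prop :=
  forall i, i < length s -> sqrt_rem (nth i s 0) = z i.

Section Fusion.
Variable F : nat -> pset.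
Variable f0 : baire.

Definition avoids (k : nat) (s : list nat) (g : baire) : Prop :=
  forall y, dom_basic (length s) (prepend s g) y -> ~ F k y.

Definition witness (k : nat) (s : list nat) : baire :=
  epsilon (inhabits (fun _ => 0)) (avoids k s).

Lemma witness_avoids k s g : avoids k s g -> avoids k s (witness k s).
Proof. intros H. unfold witness. apply epsilon_spec. now exists g. Qed.

(* The next block of a fusion sequence extending [s] must dominate [f0] and
   every witness chosen so far, whichever prefix of [s] it was chosen for. *)
Definition bound (s : list nat) : baire := fun i =>
  Nat.max (f0 i)
    (max_upto (length s) (fun n => max_upto (length s) (fun k => witness k (firstn n s) i))).

Lemma f0_le_bound s i : f0 i <= bound s i.
Proof. unfold bound. lia. Qed.

Lemma witness_le_bound s i n k : n <= length s -> k <= length s ->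
  witness k (firstn n s) i <= bound s i.
Proof.
  intros Hn Hk. unfold bound.
  pose proof (max_upto_ge _ (fun k => witness k (firstn n s) i) k Hk).
  pose proof (max_upto_ge _ (fun n => max_upto (length s)
                                (fun k => witness k (firstn n s) i)) n Hn).
  simpl in *. lia.
Qed.

Definition step (k : nat) (s s' : list nat) : Prop :=
  is_prefix s s' /\ length s < length s' /\
  (forall i, length s <= i < length s' -> bound s i <= nth i s' 0) /\
  exists g, avoids k s' g.

Definition stuck (k : nat) (s : list nat) : pset :=
  fun z => codes s z /\ ~ exists s', step k s s' /\ codes s' z.

(* Any finite piece of [z0] can be coded above [bound s] because [code] has
   arbitrarily large codes; then [F k] is avoided inside a smaller D-basic set. *)
Lemma stuck_nowhere_dense k s :
  nowhere_dense open_dom (F k) -> nowhere_dense open_std (stuck k s).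
Proof.
  intros HF. apply nowhere_dense_std_intro. intros n x.
  destruct (classic (exists z0, agree n x z0 /\ codes s z0)) as [[z0 [Hxz0 Hz0]]|Hno].
  2: { exists n, x. split; [auto|]. intros z Hz [Hs _]. apply Hno. now exists z. }
  set (m := S (Nat.max n (length s))).
  set (t := fun i => if i <? length s then nth i s 0 else
                     if i <? m then code (bound s i) (z0 i) else bound s i).
  assert (t_s : forall i, i < length s -> t i = nth i s 0).
  { intros i Hi. unfold t. now rewrite (proj2 (Nat.ltb_lt _ _) Hi). }
  assert (t_bound : forall i, length s <= i -> bound s i <= t i).
  { intros i Hi. unfold t. rewrite (proj2 (Nat.ltb_ge _ _) Hi).
    destruct (i <? m); [apply code_ge | lia]. }
  destruct (nowhere_dense_dom_shrink _ HF m t) as (N' & f' & Hm & Ag & Le & Av).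
  exists N', (decode f'). split.
  - intros z Hz i Hi. rewrite (Hxz0 i Hi), <- (Hz i ltac:(lia)).
    unfold decode. rewrite <- (Ag i ltac:(lia)).
    destruct (Nat.lt_ge_cases i (length s)).
    + rewrite t_s by easy. symmetry. now apply Hz0.
    + unfold t. rewrite (proj2 (Nat.ltb_ge _ _) H), (proj2 (Nat.ltb_lt i m)) by lia.
      now rewrite sqrt_rem_code.
  - intros z Hz [_ Hs]. apply Hs. exists (initial f' N').
    split; [|intros i Hi; rewrite length_initial in Hi; rewrite nth_initial by easy; apply Hz, Hi].
    unfold step, is_prefix. rewrite length_initial. split; [|split; [lia|split]].
    + split; [lia|]. intros i Hi. rewrite nth_initial, <- t_s by lia. apply Ag. lia.
    + intros i Hi. rewrite nth_initial by lia. specialize (t_bound i (proj1 Hi)). specialize (Le i). lia.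
    + exists f'. intros y [Ay By]. apply Av. rewrite length_initial in Ay. split.
      * intros i Hi. rewrite <- (Ay i Hi). now rewrite prepend_initial.
      * intros i. specialize (By i). now rewrite prepend_initial in By.
Qed.

Lemma unstuck_chain N0 z :
  codes (initial f0 N0) z -> (forall k s, ~ stuck k s z) ->
  exists st : nat -> list nat, st 0 = initial f0 N0 /\
    forall k, step k (st k) (st (S k)) /\ codes (st k) z.
Proof.
  intros H0 Hz.
  assert (Hnext : forall k s, codes s z -> exists s', step k s s' /\ codes s' z).
  { intros k s Hs. apply NNPP. intros Hn. now apply (Hz k s). }
  set (next k s := epsilon (inhabits nil) (fun s' => step k s s' /\ codes s' z)).
  set (st := fix st k := match k with 0 => initial f0 N0 | S k => next k (st k) end).
  assert (Hst : forall k, codes (st k) z).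
  { induction k; [exact H0|]. exact (proj2 (epsilon_spec _ _ (Hnext k _ IHk))). }
  exists st. split; [reflexivity|]. intros k. split; [|apply Hst].
  exact (proj1 (epsilon_spec _ _ (Hnext k _ (Hst k)))).
Qed.

Lemma chain_limit_lift N0 z st :
  st 0 = initial f0 N0 -> (forall k, step k (st k) (st (S k)) /\ codes (st k) z) ->
  dom_basic N0 f0 (chain_limit st) /\ decode (chain_limit st) = z /\
  forall k, ~ F k (chain_limit st).
Proof.
  intros H0 Hst.
  assert (Hpre : forall k, is_prefix (st k) (st (S k))) by (intros k; apply Hst).
  assert (Hgr : forall k, length (st k) < length (st (S k))) by (intros k; apply Hst).
  assert (L0 : length (st 0) = N0) by (now rewrite H0, length_initial).
  pose proof (chain_limit_nth st Hpre Hgr) as Hnth.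
  set (x := chain_limit st) in *.
  assert (Hblock : forall m i, length (st m) <= i < length (st (S m)) -> bound (st m) i <= x i).
  { intros m i Hi. rewrite (Hnth (S m) i) by lia. apply Hst, Hi. }
  assert (Hinit : forall i, i < N0 -> x i = f0 i).
  { intros i Hi. rewrite (Hnth 0 i), H0, nth_initial by lia; easy. }
  split; [|split].
  - split; [intros i Hi; symmetry; now apply Hinit|].
    intros i. destruct (Nat.lt_ge_cases i N0); [rewrite Hinit; lia|].
    destruct (chain_block st Hgr i) as [m Hm]; [lia|].
    specialize (Hblock m i Hm). pose proof (f0_le_bound (st m) i). lia.
  - apply functional_extensionality. intros i. unfold decode. rewrite (Hnth (S i) i).
    + apply (Hst (S i)). pose proof (chain_length_ge st Hgr (S i)). lia.
    + pose proof (chain_length_ge st Hgr (S i)). lia.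
  - intros k. destruct (Hst k) as [[_ [_ [_ [g Hg]]]] _].
    apply (witness_avoids _ _ _ Hg). split.
    + intros i Hi. rewrite prepend_lt by exact Hi. symmetry. now apply Hnth.
    + intros i. destruct (Nat.lt_ge_cases i (length (st (S k)))).
      { rewrite prepend_lt, (Hnth (S k) i) by easy. lia. }
      rewrite prepend_ge by easy.
      destruct (chain_block st Hgr i) as [m Hm].
      { pose proof (chain_length_le st Hpre 0 (S k) ltac:(lia)). lia. }
      assert (Hkm : S k <= m).
      { destruct (Nat.le_gt_cases (S k) m) as [|Hlt]; [easy|].
        pose proof (chain_length_le st Hpre (S m) (S k) Hlt). lia. }
      rewrite <- (firstn_is_prefix _ _ (chain_prefix st Hpre (S k) m Hkm)).
      pose proof (Hblock m i Hm).
      pose proof (chain_length_ge st Hgr m).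
      pose proof (witness_le_bound (st m) i _ k (chain_length_le st Hpre _ _ Hkm) ltac:(lia)).
      lia.
Qed.
End Fusion.

(** * Transfer of the Baire property *)

Lemma decode_reflects_meager N0 f0 (E : pset) :
  meager open_dom (fun x => dom_basic N0 f0 x /\ E (decode x)) ->
  meager open_std (fun z => agree N0 (decode f0) z /\ E z).
Proof.
  intros (F & HF & Hcov).
  refine (meager_subset _ (fun z => exists ks : nat * list nat, stuck F f0 (fst ks) (snd ks) z) _ _ _).
  - apply (meager_countable_union _ _
             (fun n => let (a, b) := Cantor.of_nat n in (a, list_of_nat b))).
    + intros [k s]. destruct (list_of_nat_surj s) as [b Hb].
      exists (Cantor.to_nat (k, b)). now rewrite Cantor.cancel_of_to, Hb.
    + intros [k s]. apply nowhere_dense_meager, stuck_nowhere_dense, HF.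
  - intros z [Hz HE]. apply NNPP. intros Hno.
    assert (H0 : codes (initial f0 N0) z).
    { intros i Hi. rewrite length_initial in Hi. rewrite nth_initial by easy. apply Hz, Hi. }
    destruct (unstuck_chain F f0 N0 z H0) as (st & Hst0 & Hst).
    { intros k s Hs. apply Hno. now exists (k, s). }
    destruct (chain_limit_lift F f0 N0 z st Hst0 Hst) as (Hx & Hdec & Hav).
    destruct (Hcov (chain_limit st)) as [k Hk]; [split; [exact Hx | now rewrite Hdec]|].
    exact (Hav k Hk).
Qed.

Lemma open_std_union_cylinders (P : list nat -> Prop) :
  open_std (fun z => exists l, P l /\ extends l z).
Proof.
  intros z [l [Hl Hz]]. exists (length l). intros y Hy. exists l. split; [exact Hl|].
  intros i Hi. rewrite (Hz i Hi). now apply Hy.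
Qed.

Definition dom_inside (P : pset) (l : list nat) : Prop :=
  exists f, extends l (decode f) /\ forall y, dom_basic (length l) f y -> P y.

Lemma dom_inside_meager P E l :
  dom_inside P l -> meager open_dom (fun x => P x /\ E (decode x)) ->
  meager open_std (fun z => extends l z /\ E z).
Proof.
  intros (f & Hf & HP) HM.
  assert (Hdom : meager open_dom (fun x => dom_basic (length l) f x /\ E (decode x))).
  { apply (meager_subset _ _ _ HM). intros x [Hx HE]. split; [now apply HP | exact HE]. }
  apply (meager_subset _ _ _ (decode_reflects_meager _ _ _ Hdom)).
  intros z [Hz HE]. split; [|exact HE]. intros i Hi. rewrite <- (Hf i Hi). apply Hz, Hi.
Qed.

Lemma cylinders_dom_inside_meager P E :
  meager open_dom (fun x => P x /\ E (decode x)) ->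
  meager open_std (fun z => exists l, dom_inside P l /\ (extends l z /\ E z)).
Proof.
  intros HM.
  apply (meager_countable_union _ _ list_of_nat
           (fun l z => dom_inside P l /\ (extends l z /\ E z)) list_of_nat_surj).
  intros l. apply meager_guard. intros Hl. exact (dom_inside_meager _ _ _ Hl HM).
Qed.

Definition undecided (U : pset) : pset := fun z =>
  ~ (exists l, dom_inside U l /\ extends l z) /\
  ~ (exists l, dom_inside (fun y => ~ U y) l /\ extends l z).

Lemma undecided_nowhere_dense U : open_dom U -> nowhere_dense open_std (undecided U).
Proof.
  intros HU. apply nowhere_dense_std_intro. intros n x.
  set (f i := code 0 (x i)).
  assert (Hf : forall i, decode f i = x i) by (intros i; apply sqrt_rem_code).
  destruct (classic (exists y, dom_basic n f y /\ U y)) as [[y [Hy Uy]]|Hno].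
  - destruct (HU y Uy) as (N1 & f1 & Hy1 & HsU).
    pose proof (agree_pmax _ _ _ _ _ Hy Hy1) as Ag.
    exists (Nat.max n N1), (decode (pmax f f1)). split.
    + intros z Hz i Hi. rewrite <- (Hz i ltac:(lia)), <- Hf. unfold decode. now rewrite (Ag i Hi).
    + intros z Hz [Hin _]. apply Hin. exists (initial (decode (pmax f f1)) (Nat.max n N1)).
      split; [|now apply extends_initial].
      exists (pmax f f1). rewrite length_initial.
      split; [now apply extends_initial|].
      intros w Hw. apply HsU, (dom_basic_pmax _ _ _ _ _ _ Hy Hy1 Hw).
  - exists n, x. split; [auto|]. intros z Hz [_ Hout]. apply Hout.
    exists (initial x n). split; [|now apply extends_initial].
    exists f. rewrite length_initial. split.
    + apply extends_initial. intros i _. symmetry. apply Hf.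
    + intros w Hw Uw. apply Hno. now exists w.
Qed.

Theorem theorem3p1 (G : pointclass) :
  topologically_reasonable G -> Gamma_D G -> Gamma_C G.
Proof.
  intros [Hcont _] HD A HA.
  destruct (HD _ (Hcont A decode HA continuous_decode)) as (U & HU & Herr).
  exists (fun z => exists l, dom_inside U l /\ extends l z).
  split; [apply open_std_union_cylinders|].
  refine (meager_subset _ (fun z => undecided U z \/
            ((exists l, dom_inside U l /\ (extends l z /\ ~ A z)) \/
             (exists l, dom_inside (fun y => ~ U y) l /\ (extends l z /\ A z)))) _ _ _).
  - apply meager_union; [now apply nowhere_dense_meager, undecided_nowhere_dense|].
    apply meager_union; apply cylinders_dom_inside_meager;
      apply (meager_subset _ _ _ Herr); intros x [HUx HAx] Hiff; tauto.
  - intros z Hz. destruct (classic (A z)) as [Az|nAz].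
    + assert (nV : ~ exists l, dom_inside U l /\ extends l z) by tauto.
      destruct (classic (exists l, dom_inside (fun y => ~ U y) l /\ extends l z)) as [[l [Hl Hzl]]|Hno].
      * right; right. now exists l.
      * left. now split.
    + assert (V : exists l, dom_inside U l /\ extends l z) by tauto.
      destruct V as [l [Hl Hzl]]. right; left. now exists l.
Qed.
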